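(* Consider octahedra $p=(p_1,\ldots,p_6)\in(\mathbf{R}^3)^6$ with $p_1$ and $p_6$ opposite vertices and equatorial cycle $p_2,p_3,p_4,p_5$ (so the opposite pairs are $\{1,6\},\{2,4\},\{3,5\}$), and the vector field (gradient of the mean volume) $$X_p=\tfrac16\big(\nu(2,3,4,5),\ \nu(1,5,6,3),\ \nu(1,2,6,4),\ \nu(1,3,6,5),\ \nu(1,4,6,2),\ \nu(2,5,4,3)\big).$$ Then every $X$-optimal $p$ is a regular octahedron (with opposite vertex pairs $\{p_1,p_6\},\{p_2,p_4\},\{p_3,p_5\}$).
   Context: Notation: $\nu(i_1,\ldots,i_k)=p_{i_1}\times p_{i_2}+\cdots+p_{i_{k-1}}\times p_{i_k}+p_{i_k}\times p_{i_1}$. A configuration $p\in(\mathbf{R}^3)^n$ (not all points equal) is called $X$-optimal if there exist $q=\mu p+(c,\ldots,c)$ with $\mu>0$, $c\in\mathbf{R}^3$, and a real number $\lambda\neq0$ such that $X_q=\lambda q$. *)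

From Stdlib Require Import Reals Lra.
Open Scope R_scope.

Definition vec3 : Type := (R * R * R)%type.

Definition vadd (a b : vec3) : vec3 :=
  let '(a1, a2, a3) := a in let '(b1, b2, b3) := b in (a1 + b1, a2 + b2, a3 + b3).
Definition vsub (a b : vec3) : vec3 :=
  let '(a1, a2, a3) := a in let '(b1, b2, b3) := b in (a1 - b1, a2 - b2, a3 - b3).
Definition vscale (k : R) (a : vec3) : vec3 :=
  let '(a1, a2, a3) := a in (k * a1, k * a2, k * a3).
Definition dot (a b : vec3) : R :=
  let '(a1, a2, a3) := a in let '(b1, b2, b3) := b in a1 * b1 + a2 * b2 + a3 * b3.
Definition cross (a b : vec3) : vec3 :=
  let '(a1, a2, a3) := a in let '(b1, b2, b3) := b in
  (a2 * b3 - a3 * b2, a3 * b1 - a1 * b3, a1 * b2 - a2 * b1).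

Definition nu4 (a b c d : vec3) : vec3 :=
  vadd (vadd (cross a b) (cross b c)) (vadd (cross c d) (cross d a)).

Record config := Config { P1 : vec3; P2 : vec3; P3 : vec3; P4 : vec3; P5 : vec3; P6 : vec3 }.

Definition Xfield (p : config) : config :=
  let '(Config p1 p2 p3 p4 p5 p6) := p in
  Config (vscale (1/6) (nu4 p2 p3 p4 p5))
         (vscale (1/6) (nu4 p1 p5 p6 p3))
         (vscale (1/6) (nu4 p1 p2 p6 p4))
         (vscale (1/6) (nu4 p1 p3 p6 p5))
         (vscale (1/6) (nu4 p1 p4 p6 p2))
         (vscale (1/6) (nu4 p2 p5 p4 p3)).

Definition cmap (f : vec3 -> vec3) (p : config) : config :=
  let '(Config p1 p2 p3 p4 p5 p6) := p in
  Config (f p1) (f p2) (f p3) (f p4) (f p5) (f p6).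

Definition all_equal (p : config) : Prop :=
  let '(Config p1 p2 p3 p4 p5 p6) := p in
  p1 = p2 /\ p1 = p3 /\ p1 = p4 /\ p1 = p5 /\ p1 = p6.

Definition X_optimal (p : config) : Prop :=
  ~ all_equal p /\
  exists (mu : R) (c : vec3) (lambda : R),
    0 < mu /\ lambda <> 0 /\
    let q := cmap (fun x => vadd (vscale mu x) c) p in
    Xfield q = cmap (vscale lambda) q.

Definition regular_octahedron (p : config) : Prop :=
  let '(Config p1 p2 p3 p4 p5 p6) := p in
  exists (c u v w : vec3),
    0 < dot u u /\ dot u u = dot v v /\ dot u u = dot w w /\
    dot u v = 0 /\ dot u w = 0 /\ dot v w = 0 /\
    p1 = vadd c u /\ p6 = vsub c u /\
    p2 = vadd c v /\ p4 = vsub c v /\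
    p3 = vadd c w /\ p5 = vsub c w.

(* After normalising, an X-optimal configuration q satisfies X_q = lambda q.  The
   fields at opposite vertices are given by the same quadrilateral traversed in
   opposite directions, so they are opposite and q is centrally symmetric.  On a
   centrally symmetric configuration the equations become the cyclic system
   q1 = k q2 x q3, q2 = k q3 x q1, q3 = k q1 x q2, which forces q1, q2, q3 to be
   pairwise orthogonal, and then by Lagrange's identity
   |q1|^2 = k^2 |q2|^2 |q3|^2 and its cyclic shifts force equal lengths. *)

From Stdlib Require Import Reals Lra.
Open Scope R_scope.

Ltac vec3_destruct :=
  repeat match goal with v : vec3 |- _ => destruct v as [[? ?] ?] end.

Lemma vec3_eq (x1 x2 x3 y1 y2 y3 : R) :
  x1 = y1 -> x2 = y2 -> x3 = y3 -> (x1, x2, x3) = (y1, y2, y3).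
Proof. intros -> -> ->; reflexivity. Qed.

Ltac vec3_ring := vec3_destruct; simpl; apply vec3_eq; ring.

Definition vzero : vec3 := (0, 0, 0).

Notation vopp := (vscale (-1)).

Lemma vscale_inj (k : R) (a b : vec3) : k <> 0 -> vscale k a = vscale k b -> a = b.
Proof.
  intros Hk Hab; vec3_destruct; simpl in Hab; injection Hab as H1 H2 H3.
  apply vec3_eq; eapply Rmult_eq_reg_l; eauto.
Qed.

Lemma vopp_zero : vopp vzero = vzero.
Proof. vec3_ring. Qed.

Lemma vadd_zero_l (a : vec3) : vadd vzero a = a.
Proof. vec3_ring. Qed.

Lemma vsub_zero_l (a : vec3) : vsub vzero a = vopp a.
Proof. vec3_ring. Qed.

Lemma vscale_comm (k l : R) (a : vec3) : vscale k (vscale l a) = vscale l (vscale k a).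
Proof. vec3_ring. Qed.

Lemma dot_comm (a b : vec3) : dot a b = dot b a.
Proof. vec3_destruct; simpl; ring. Qed.

Lemma dot_scale_r (k : R) (a b : vec3) : dot a (vscale k b) = k * dot a b.
Proof. vec3_destruct; simpl; ring. Qed.

Lemma dot_scale (k : R) (a b : vec3) : dot (vscale k a) (vscale k b) = k * k * dot a b.
Proof. vec3_destruct; simpl; ring. Qed.

Lemma dot_self_ge0 (a : vec3) : 0 <= dot a a.
Proof. vec3_destruct; simpl; nra. Qed.

Lemma dot_self_eq0 (a : vec3) : dot a a = 0 -> a = vzero.
Proof.
  vec3_destruct; simpl; intro H.
  assert (r = 0) by nra; assert (r0 = 0) by nra; assert (r1 = 0) by nra.
  subst; reflexivity.
Qed.

Lemma dot_cross_l (a b : vec3) : dot a (cross a b) = 0.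
Proof. vec3_destruct; simpl; ring. Qed.

Lemma dot_cross_r (a b : vec3) : dot b (cross a b) = 0.
Proof. vec3_destruct; simpl; ring. Qed.

Lemma dot_cross_cross (a b : vec3) :
  dot (cross a b) (cross a b) = dot a a * dot b b - dot a b ^ 2.
Proof. vec3_destruct; simpl; ring. Qed.

Lemma nu4_rev (a b c d : vec3) : nu4 a d c b = vopp (nu4 a b c d).
Proof. vec3_ring. Qed.

Lemma nu4_antipodal (a b : vec3) : nu4 a b (vopp a) (vopp b) = vscale 4 (cross a b).
Proof. vec3_ring. Qed.

Lemma nu4_antipodal_rev (a b : vec3) : nu4 a (vopp b) (vopp a) b = vscale 4 (cross b a).
Proof. vec3_ring. Qed.

Section Eigen.

Variable lambda : R.
Hypothesis lambda_neq0 : lambda <> 0.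

Lemma eigen_reversed_opp (n x y : vec3) :
  vscale (1/6) n = vscale lambda x -> vscale (1/6) (vopp n) = vscale lambda y ->
  y = vopp x.
Proof.
  intros Hx Hy; apply (vscale_inj lambda); auto.
  rewrite <- Hy, vscale_comm, Hx, vscale_comm; reflexivity.
Qed.

Lemma eigen_cross (a x : vec3) :
  vscale (1/6) (vscale 4 a) = vscale lambda x -> x = vscale (2 / (3 * lambda)) a.
Proof.
  intro H; apply (vscale_inj lambda); auto.
  rewrite <- H; vec3_destruct; simpl; apply vec3_eq; field; auto.
Qed.

End Eigen.

(* The two equal-length conclusions come from (A - B) (1 + k^2 C) = 0 and its
   analogue, where A, B, C are the squared lengths. *)
Lemma cross_cycle_orthogonal (k : R) (a b c : vec3) :
  a = vscale k (cross b c) -> b = vscale k (cross c a) -> c = vscale k (cross a b) ->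
  dot a b = 0 /\ dot a c = 0 /\ dot b c = 0 /\ dot a a = dot b b /\ dot a a = dot c c.
Proof.
  intros Ha Hb Hc.
  assert (Hab : dot a b = 0) by (rewrite Hb, dot_scale_r, dot_cross_r; ring).
  assert (Hac : dot a c = 0) by (rewrite Hc, dot_scale_r, dot_cross_l; ring).
  assert (Hbc : dot b c = 0) by (rewrite Hc, dot_scale_r, dot_cross_r; ring).
  assert (Na : dot a a = k * k * (dot b b * dot c c))
    by (rewrite Ha at 1 2; rewrite dot_scale, dot_cross_cross, Hbc; ring).
  assert (Nb : dot b b = k * k * (dot c c * dot a a))
    by (rewrite Hb at 1 2; rewrite dot_scale, dot_cross_cross, (dot_comm c a), Hac; ring).
  assert (Nc : dot c c = k * k * (dot a a * dot b b))
    by (rewrite Hc at 1 2; rewrite dot_scale, dot_cross_cross, Hab; ring).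
  pose proof (dot_self_ge0 b); pose proof (dot_self_ge0 c).
  repeat split; auto.
  - assert (E : (dot a a - dot b b) * (1 + k * k * dot c c) = 0) by nra.
    apply Rmult_integral in E as [E|E]; nra.
  - assert (E : (dot a a - dot c c) * (1 + k * k * dot b b) = 0) by nra.
    apply Rmult_integral in E as [E|E]; nra.
Qed.

Lemma eigenconfig_regular (q : config) (lambda : R) :
  lambda <> 0 -> Xfield q = cmap (vscale lambda) q -> ~ all_equal q ->
  regular_octahedron q.
Proof.
  intros Hl H Hne; destruct q as [q1 q2 q3 q4 q5 q6].
  cbv beta iota delta [Xfield cmap] in H; injection H as E1 E2 E3 E4 E5 E6.
  assert (H6 : q6 = vopp q1)
    by (apply (eigen_reversed_opp lambda Hl (nu4 q2 q3 q4 q5)); rewrite <- ?nu4_rev; assumption).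
  assert (H4 : q4 = vopp q2)
    by (apply (eigen_reversed_opp lambda Hl (nu4 q1 q5 q6 q3)); rewrite <- ?nu4_rev; assumption).
  assert (H5 : q5 = vopp q3)
    by (apply (eigen_reversed_opp lambda Hl (nu4 q1 q2 q6 q4)); rewrite <- ?nu4_rev; assumption).
  subst q4 q5 q6.
  rewrite nu4_antipodal in E1, E3; rewrite nu4_antipodal_rev in E2.
  apply eigen_cross in E1, E2, E3; auto.
  destruct (cross_cycle_orthogonal _ _ _ _ E1 E2 E3) as (D12 & D13 & D23 & N2 & N3).
  assert (Pos : 0 < dot q1 q1).
  { destruct (Rle_lt_or_eq_dec _ _ (dot_self_ge0 q1)) as [Hlt|Heq]; [exact Hlt|].
    exfalso; apply Hne.
    rewrite (dot_self_eq0 q1), (dot_self_eq0 q2), (dot_self_eq0 q3), vopp_zero by congruence.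
    simpl; tauto. }
  exists vzero, q1, q2, q3.
  rewrite !vadd_zero_l, !vsub_zero_l; repeat split; auto; congruence.
Qed.

Lemma affine_solve (mu : R) (c x y : vec3) :
  mu <> 0 -> vadd (vscale mu x) c = y -> x = vscale (/ mu) (vsub y c).
Proof.
  intros Hmu <-; vec3_destruct; simpl; apply vec3_eq; field; assumption.
Qed.

Lemma all_equal_cmap_inj (f : vec3 -> vec3) (p : config) :
  (forall x y, f x = f y -> x = y) -> all_equal (cmap f p) -> all_equal p.
Proof.
  intros Hf; destruct p; simpl; intros (E2 & E3 & E4 & E5 & E6).
  repeat split; apply Hf; assumption.
Qed.

Lemma regular_octahedron_affine_inv (mu : R) (c : vec3) (p : config) :
  mu <> 0 -> regular_octahedron (cmap (fun x => vadd (vscale mu x) c) p) ->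
  regular_octahedron p.
Proof.
  intros Hmu; destruct p as [p1 p2 p3 p4 p5 p6]; simpl.
  intros (o & u & v & w & Hu & Nv & Nw & Duv & Duw & Dvw & E1 & E6 & E2 & E4 & E3 & E5).
  apply affine_solve in E1, E6, E2, E4, E3, E5; auto; subst.
  assert (Hk : 0 < / mu * / mu) by (apply Rsqr_pos_lt, Rinv_neq_0_compat; assumption).
  exists (vscale (/ mu) (vsub o c)), (vscale (/ mu) u), (vscale (/ mu) v), (vscale (/ mu) w).
  rewrite !dot_scale, <- Nv, <- Nw, Duv, Duw, Dvw.
  repeat split; try ring; try nra; vec3_ring.
Qed.

Theorem mainTheorem8 (p : config) :
  X_optimal p -> regular_octahedron p.
Proof.
  intros [Hne (mu & c & lambda & Hmu & Hl & Heq)].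
  assert (Hmu0 : mu <> 0) by lra.
  apply (regular_octahedron_affine_inv mu c); auto.
  apply (eigenconfig_regular _ lambda Hl Heq).
  intro Hq; apply Hne; revert Hq; apply all_equal_cmap_inj.
  intros x y Hxy.
  rewrite (affine_solve mu c x _ Hmu0 eq_refl), (affine_solve mu c y _ Hmu0 eq_refl), Hxy.
  reflexivity.
Qed.
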